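(* Let $\mathsf{R}$ be a commutative ring, $n\ge 1$, $D$, $m$ positive integers, $0<\mu<1$, and $\ell\ge 1$. If a finite set $A \subseteq \mathsf{R}$ is an $(n,D,m,\mu)$-diversifying set, then $A^\ell \subseteq \mathsf{R}^\ell$ is an $(n,D,m,\mu^\ell)$-diversifying set, where addition and multiplication in $\mathsf{R}^\ell$ are componentwise (so a polynomial $h\in\mathsf{R}[x_1,\ldots,x_n]$ evaluated at $\boldsymbol\beta=(\boldsymbol\alpha_1,\ldots,\boldsymbol\alpha_\ell)$, with $\boldsymbol\alpha_k\in A^n$, gives $h(\boldsymbol\beta) = (h(\boldsymbol\alpha_1),\ldots,h(\boldsymbol\alpha_\ell))\in\mathsf{R}^\ell$, which is nonzero iff some component is nonzero).
   Context: Definition (diversifying set): For $n\ge 1$, bounds $D,m$ and $0<\mu<1$, a finite set $A$ of evaluation values is an $(n,D,m,\mu)$-diversifying set if for every set $\mathcal{H}\subseteq\mathsf{R}[x_1,\ldots,x_n]$ of nonzero polynomials with $\#\mathcal{H}\le m$ and each $h\in\mathcal{H}$ having max degree less than $D$ (every variable appears with exponent less than $D$), we have $\Pr_{\boldsymbol\alpha\in A^n}[h(\boldsymbol\alpha)\ne 0 \text{ for all } h\in\mathcal{H}] \ge 1-\mu$, where $\boldsymbol\alpha$ is chosen uniformly at random from $A^n$. *)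

From HB Require Import structures.
From mathcomp Require Import all_boot all_order all_algebra.
From mathcomp Require Import finmap mpoly.
Set Implicit Arguments. Unset Strict Implicit. Unset Printing Implicit Defensive.
Import Order.TTheory GRing.Theory Num.Theory.
Local Open Scope ring_scope.
Local Open Scope fset_scope.

Definition maxdeg_lt (R : nzRingType) (n D : nat) (h : {mpoly R[n]}) : Prop :=
  forall mo : 'X_{1..n}, mo \in msupp h -> forall i : 'I_n, (mo i < D)%N.

Definition prob (F : realFieldType) (T : finType) (P : pred T) : F :=
  (#|[set x | P x]|%:R / #|T|%:R).

(* Generic notion: evaluation values range over the finite type V (a finite
   set of evaluation values), a point is alpha in V^n chosen uniformly, and
   [ev h alpha] is the value h(alpha) in the ambient additive group S. *)
Definition diversifying_wrt (R : nzRingType) (n : nat) (V : finType)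
    (S : zmodType) (ev : {mpoly R[n]} -> ('I_n -> V) -> S)
    (D m : nat) (F : realFieldType) (mu : F) : Prop :=
  forall H : {fset {mpoly R[n]}},
    (#|` H| <= m)%N ->
    (forall h, h \in H -> h != 0 /\ maxdeg_lt D h) ->
    1 - mu <= @prob F {ffun 'I_n -> V}
                (fun alpha => [forall h : H, ev (val h) alpha != 0]).

Definition diversifying (R : comNzRingType) (n D m : nat)
    (F : realFieldType) (mu : F) (A : {fset R}) : Prop :=
  @diversifying_wrt R n A R
    (fun h alpha => h.@[fun i => val (alpha i)]) D m F mu.

(* An element of A^l is
   represented by b : {ffun 'I_l -> A} (i.e. the point (val (b k))_k of R^l),
   and for beta = (beta_1,...,beta_n) in (A^l)^n,
   h(beta) = (h(alpha_1),...,h(alpha_l)) in R^l = {ffun 'I_l -> R},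
   where alpha_k = (val (beta_i k))_i in A^n. *)
Definition eval_pow (R : comNzRingType) (A : {fset R}) (l n : nat)
    (h : {mpoly R[n]}) (beta : 'I_n -> {ffun 'I_l -> A}) : {ffun 'I_l -> R} :=
  [ffun k => h.@[fun i => val (beta i k)]].

Definition diversifying_pow (R : comNzRingType) (l n D m : nat)
    (F : realFieldType) (mu : F) (A : {fset R}) : Prop :=
  @diversifying_wrt R n {ffun 'I_l -> A} {ffun 'I_l -> R}
    (@eval_pow R A l n) D m F mu.

From HB Require Import structures.
From mathcomp Require Import all_boot all_order all_algebra.
From mathcomp Require Import finmap mpoly.
Import Order.TTheory GRing.Theory Num.Theory.
Local Open Scope ring_scope.

(* A point beta of (A^l)^n is the same as l independent uniform points of A^n,
   its "columns".  If h(beta) = 0 in R^l then h vanishes at every column, so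
   beta is bad for the family H only if all l columns are bad; by independence
   this has probability at most (Pr[a column is bad])^l <= mu^l. *)

Section UniformProbability.

Variable F : realFieldType.

Lemma prob_predC (T : finType) (P : pred T) :
  (0 < #|T|)%N -> prob F (predC P) = 1 - prob F P.
Proof.
move=> T_gt0; rewrite /prob.
have -> : [set x | predC P x] = ~: [set x | P x] by apply/setP => x; rewrite !inE.
apply/eqP; rewrite eq_sym subr_eq -mulrDl -natrD addnC cardsC divff //.
by rewrite pnatr_eq0 -lt0n.
Qed.

Lemma prob_eq0 (T : finType) (P : pred T) : #|T| = 0%N -> prob F P = 0.
Proof. by move=> T0; rewrite /prob T0 invr0 mulr0. Qed.

Lemma prob_ge0 (T : finType) (P : pred T) : 0 <= prob F P.
Proof. by rewrite /prob divr_ge0. Qed.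

Lemma le_prob (T : finType) (P Q : pred T) :
  (forall x, P x -> Q x) -> prob F P <= prob F Q.
Proof.
move=> PQ; rewrite /prob ler_wpM2r ?invr_ge0 ?ler0n // ler_nat.
by apply/subset_leq_card/subsetP => x; rewrite !inE => /PQ.
Qed.

Lemma prob_bij (T U : finType) (phi : T -> U) (P : pred U) :
  bijective phi -> prob F (fun x => P (phi x)) = prob F P.
Proof.
move=> phi_bij; rewrite /prob (bij_eq_card phi_bij).
have -> : [set x | P (phi x)] = phi @^-1: [set y | P y].
  by apply/setP => x; rewrite !inE.
by rewrite on_card_preimset //; apply: onW_bij.
Qed.

Lemma prob_ffun_all (I T : finType) (Q : pred T) :
  prob F (fun f : {ffun I -> T} => [forall i, Q (f i)]) = prob F Q ^+ #|I|.
Proof.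
rewrite /prob expr_div_n -!natrX card_ffun -(card_ffun_on I [set x | Q x]).
congr (_%:R / _); apply: eq_card => f; rewrite inE.
by apply/forallP/ffun_onP => fQ i; move/(_ i): fQ; rewrite inE.
Qed.

End UniformProbability.

Definition ffun_transpose {I J : finType} {T : Type}
    (f : {ffun I -> {ffun J -> T}}) : {ffun J -> {ffun I -> T}} :=
  [ffun j => [ffun i => f i j]].

Lemma ffun_transposeK (I J : finType) (T : Type) :
  cancel (@ffun_transpose I J T) (@ffun_transpose J I T).
Proof. by move=> f; apply/ffunP => i; apply/ffunP => j; rewrite !ffunE. Qed.

Lemma ffun_transpose_bij (I J : finType) (T : Type) :
  bijective (@ffun_transpose I J T).
Proof. exact: Bijective (@ffun_transposeK I J T) (@ffun_transposeK J I T). Qed.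

Lemma eval_pow_eq0 (R : comNzRingType) (A : {fset R}) (l n : nat)
    (h : {mpoly R[n]}) (beta : {ffun 'I_n -> {ffun 'I_l -> A}}) :
  (eval_pow h beta == 0) =
  [forall k, h.@[fun i => val (ffun_transpose beta k i)] == 0].
Proof.
apply/eqP/forallP => [beta0 k | col0].
  move/ffunP/(_ k): beta0; rewrite !ffunE => <-.
  by apply/eqP/meval_eq => i; rewrite !ffunE.
apply/ffunP => k; rewrite !ffunE -(eqP (col0 k)).
by apply: meval_eq => i; rewrite !ffunE.
Qed.

Theorem lemma4p5 (R : comNzRingType) (n D m : nat) (F : realFieldType)
    (mu : F) (l : nat) (A : {fset R}) :
  (1 <= n)%N -> (0 < D)%N -> (0 < m)%N -> 0 < mu -> mu < 1 -> (1 <= l)%N ->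
  diversifying n D m mu A ->
  diversifying_pow l n D m (mu ^+ l) A.
Proof.
move=> _ _ _ mu_gt0 mu_lt1 _ A_div H H_card H_deg.
pose good (alpha : {ffun 'I_n -> A}) :=
  [forall h : H, (val h).@[fun i => val (alpha i)] != 0].
have good_prob : 1 - mu <= prob F good := A_div H H_card H_deg.
have T_gt0 : (0 < #|{ffun 'I_n -> A}|)%N.
  rewrite lt0n; apply: contraTneq good_prob => /(@prob_eq0 F _ good) ->.
  by rewrite -ltNge subr_gt0.
have bad_prob : prob F (predC good) <= mu.
  by rewrite prob_predC // lerBlDr -lerBlDl.
rewrite lerBlDl -lerBlDr -prob_predC; last first.
  by rewrite -(bij_eq_card (@ffun_transpose_bij _ _ A)) card_ffun expn_gt0 T_gt0.
pose all_cols_bad (f : {ffun 'I_l -> {ffun 'I_n -> A}}) :=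
  [forall k, predC good (f k)].
apply: (@le_trans _ _ (prob F (fun beta => all_cols_bad (ffun_transpose beta)))).
  apply: le_prob => beta /forallPn [h]; rewrite negbK eval_pow_eq0 => /forallP col0.
  by apply/forallP => k; apply/forallPn; exists h; rewrite negbK col0.
rewrite prob_bij; last exact: ffun_transpose_bij.
rewrite /all_cols_bad (@prob_ffun_all F _ _ (predC good)) card_ord.
by apply: lerXn2r; rewrite // nnegrE ?prob_ge0 ?ltW.
Qed.
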